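(* Let $\mathbf{A}\in\mathbb{R}^{M\times N}$, $\mathbf{Y}\in\mathbb{R}^{M\times L}$, and let $(\mathbf{g}(t),\mathbf{V}(t))$, $t\ge0$, evolve under the continuous gradient flow of $\mathcal{L}(\mathbf{g},\mathbf{V})=\Vert\mathbf{Y}-\mathbf{A}((\mathbf{g}^{\odot 2}\mathbf{1}_L)\odot\mathbf{V})\Vert_F^2$, and assume perfect row balancedness: $\frac12 g_i^2(t)=\sum_{j\in[L]}V_{ij}^2(t)$ for all $i\in[N]$ and all $t\ge0$. Let $\mathbf{X}(t)=(\mathbf{g}(t)^{\odot 2}\mathbf{1}_L)\odot\mathbf{V}(t)$, $\boldsymbol{\Lambda}(t)=\mathbf{A}^\top(\mathbf{Y}-\mathbf{A}\mathbf{X}(t))$ with $i$-th row $\boldsymbol{\lambda}_i(t)$, and $\hat{\mathbf{x}}_i(t)=\mathbf{X}_{i:}(t)/\Vert\mathbf{X}_{i:}(t)\Vert_2$ if $\mathbf{X}_{i:}(t)\neq\mathbf 0$, $\hat{\mathbf{x}}_i(t)=\mathbf{0}$ otherwise. Then the rate of change of the Euclidean norm of the $i$-th row of $\mathbf{X}(t)$ satisfies $$\frac{d}{dt}\Vert\mathbf{X}_{i:}(t)\Vert_2=2^{2/3}\cdot 6\,\langle\boldsymbol{\lambda}_i(t),\hat{\mathbf{x}}_i(t)\rangle\,\Vert\mathbf{X}_{i:}(t)\Vert_2^{4/3}.$$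
   Context: $\odot$ is the entrywise product and $\mathbf{1}_L$ the $1\times L$ all-ones row vector, so $X_{ij}=g_i^2V_{ij}$; $\mathbf{X}_{i:}$ is the $i$-th row. Gradient flow: $\frac{d}{dt}g_l=-\partial\mathcal{L}/\partial g_l$, $\frac{d}{dt}V_{lm}=-\partial\mathcal{L}/\partial V_{lm}$ along the curve. *)

From HB Require Import structures.
From mathcomp Require Import all_boot all_order all_algebra.
From mathcomp Require Import all_classical all_reals all_analysis.
Set Implicit Arguments. Unset Strict Implicit. Unset Printing Implicit Defensive.
Import Order.TTheory GRing.Theory Num.Theory.
Import numFieldNormedType.Exports.
Local Open Scope ring_scope.

Section Defs.
Variables (R : realType) (M N L : nat).
Variables (A : 'M[R]_(M, N)) (Y : 'M[R]_(M, L)).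

Definition Xof (g : 'I_N -> R) (V : 'I_N -> 'I_L -> R) : 'M[R]_(N, L) :=
  \matrix_(i < N, j < L) (g i ^+ 2 * V i j).

Definition loss (g : 'I_N -> R) (V : 'I_N -> 'I_L -> R) : R :=
  \sum_(m < M) \sum_(j < L) ((Y - A *m Xof g V) m j) ^+ 2.

Definition upd_g (g : 'I_N -> R) (l : 'I_N) (s : R) : 'I_N -> R :=
  fun k => if k == l then s else g k.

Definition upd_V (V : 'I_N -> 'I_L -> R) (l : 'I_N) (m : 'I_L) (s : R)
  : 'I_N -> 'I_L -> R :=
  fun k j => if (k == l) && (j == m) then s else V k j.

Definition dloss_dg g V (l : 'I_N) : R :=
  derive1 (fun s => loss (upd_g g l s) V) (g l).
Definition dloss_dV g V (l : 'I_N) (m : 'I_L) : R :=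
  derive1 (fun s => loss g (upd_V V l m s)) (V l m).

Definition Lam (X : 'M[R]_(N, L)) : 'M[R]_(N, L) := A^T *m (Y - A *m X).

Definition rownorm (X : 'M[R]_(N, L)) (i : 'I_N) : R :=
  Num.sqrt (\sum_(j < L) X i j ^+ 2).

Definition xhat (X : 'M[R]_(N, L)) (i : 'I_N) (j : 'I_L) : R :=
  if rownorm X i != 0 then X i j / rownorm X i else 0.
End Defs.

From HB Require Import structures.
From mathcomp Require Import all_boot all_order all_algebra.
From mathcomp Require Import all_classical all_reals all_analysis.
From mathcomp Require Import ring.
Import Order.TTheory GRing.Theory Num.Theory.
Import numFieldNormedType.Exports.
Local Open Scope ring_scope.

(* Balancedness gives ||X_i:|| = |g_i|^3 / sqrt 2.  Along the flow of g,
   g_i' = 4 g_i <lambda_i, V_i:>, while <lambda_i, xhat_i> ||X_i:|| = g_i^2 <lambda_i, V_i:>.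
   Since y |-> |y|^3 is differentiable everywhere (also at 0), the chain rule gives
   ||X_i:||' = (12 / sqrt 2) g_i^2 |g_i| <lambda_i, V_i:>, and eliminating g_i through
   |g_i|^4 = 2^(2/3) ||X_i:||^(4/3) yields the claimed rate. *)

Lemma is_derive_sum_pointwise {R : numFieldType} {V W : normedModType R} {n}
    {h : 'I_n -> V -> W} {dh : 'I_n -> W} {x v : V} :
  (forall i, is_derive x v (h i) (dh i)) ->
  is_derive x v (fun y => \sum_(i < n) h i y) (\sum_(i < n) dh i).
Proof. by move=> D; rewrite -fct_sumE; exact: is_derive_sum. Qed.

Section RealCalculus.
Context {R : realType}.

Lemma is_derive_normr_cube (x : R) :
  is_derive x 1 (fun y : R => `|y| ^+ 3) (3 * x * `|x|).
Proof.
have [->|x0] := eqVneq x 0.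
  rewrite mulr0 mul0r; apply/is_derive1_caratheodory.
  exists (fun z => z * `|z|); split => [z||]; last by rewrite mul0r.
  - by rewrite normr0 expr0n !subr0 exprS real_normK ?num_real //; ring.
  - exact: continuousM cvg_id (@norm_continuous _ _ _).
have sg_near : \forall y \near x, Num.sg y = Num.sg x.
  move: x0; rewrite neq_lt => /orP[xlt0|xgt0]; near=> y.
  - by rewrite !ltr0_sg //; near: y; exact: lt_nbhsl.
  - by rewrite !gtr0_sg //; near: y; exact: lt_nbhsr.
have D : is_derive x 1 (Num.sg x *: (@id R ^+ 3)) (3 * x * `|x|).
  apply: is_derive_eq; rewrite normrEsg /= scaler1.
  by rewrite -[_ *: _]/(_ * _); ring.
apply: near_eq_is_derive D; near=> y => /=.
rewrite [RHS]exprS real_normK ?num_real // normrEsg (near sg_near y) // !fctE.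
by rewrite -[_ *: _]/(_ * _); ring.
Unshelve. all: by end_near.
Qed.

Lemma is_derive_sqr_shift (e c x : R) :
  is_derive x 1 (fun s : R => (e + c * (x ^+ 2 - s ^+ 2)) ^+ 2) (-4 * c * x * e).
Proof.
change (is_derive x 1 ((cst e + cst c * (cst (x ^+ 2) - @id R ^+ 2)) ^+ 2)
                      (-4 * c * x * e)).
apply: is_derive_eq; rewrite !fctE /= subrr mulr0 addr0 !expr1 !scaler0 !addr0.
by rewrite -[LHS]/((2 * e) * (0 + c * (0 - (2 * x) * 1))); ring.
Qed.

Lemma powR_cube_div_sqrt2 (a : R) : 0 <= a ->
  2 `^ (2 / 3) * (a ^+ 3 / Num.sqrt 2) `^ (4 / 3) = a ^+ 4.
Proof.
move=> a_ge0; have s2_gt0 : 0 < Num.sqrt (2 : R) by rewrite sqrtr_gt0.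
have -> : (2 : R) `^ (2 / 3) = Num.sqrt 2 `^ (4 / 3).
  by rewrite -powR12_sqrt ?ler0n // -powRrM; congr (_ `^ _); field.
rewrite -powRM ?divr_ge0 ?exprn_ge0 ?sqrtr_ge0 // mulrCA mulfV ?gt_eqF // mulr1.
rewrite -powR_mulrn // -powRrM (_ : 3%:R * (4 / 3) = 4%:R :> R) ?powR_mulrn //.
by field.
Qed.

Lemma balanced_rate_identity (G S : R) :
  let r := `|G| ^+ 3 / Num.sqrt 2 in
  (Num.sqrt 2)^-1 * (3 * G * `|G| * (4 * G * S))
  = 2 `^ (2 / 3) * 6 * (G ^+ 2 * S / r) * r `^ (4 / 3).
Proof.
move=> r; have s2_gt0 : 0 < Num.sqrt (2 : R) by rewrite sqrtr_gt0.
have sqrt2V : (Num.sqrt 2)^-1 = Num.sqrt 2 / 2 :> R.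
  rewrite -[X in _ / X](sqr_sqrtr (ler0n R 2)) expr2 invfM mulrA.
  by rewrite mulfV ?mul1r ?gt_eqF.
rewrite [RHS](_ : _ = 6 * (G ^+ 2 * S / r) * (2 `^ (2 / 3) * r `^ (4 / 3))); last by ring.
rewrite powR_cube_div_sqrt2 // sqrt2V /r.
have [->|G0] := eqVneq G 0; first by rewrite normr0 !(expr0n, mul0r, mulr0).
by field; rewrite normr_eq0 G0 gt_eqF.
Qed.

End RealCalculus.

Section RowNorm.
Variables (R : realType) (N L : nat).

(* No case split is needed: [x / 0 = 0]. *)
Lemma xhatE (X : 'M[R]_(N, L)) i j : xhat X i j = X i j / rownorm X i.
Proof. by rewrite /xhat; case: eqP => [->|]; rewrite ?invr0 ?mulr0. Qed.

Lemma sum_mul_xhat (B X : 'M[R]_(N, L)) i :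
  \sum_(j < L) B i j * xhat X i j = (\sum_(j < L) B i j * X i j) / rownorm X i.
Proof. by rewrite mulr_suml; apply: eq_bigr => j _; rewrite xhatE mulrA. Qed.

Lemma rownorm_Xof_balanced (g : 'I_N -> R) (V : 'I_N -> 'I_L -> R) i :
  2^-1 * g i ^+ 2 = \sum_(j < L) V i j ^+ 2 ->
  rownorm (Xof g V) i = `|g i| ^+ 3 / Num.sqrt 2.
Proof.
move=> balanced; rewrite /rownorm.
under eq_bigr do rewrite mxE exprMn.
rewrite -big_distrr /= -balanced.
have -> : (g i ^+ 2) ^+ 2 * (2^-1 * g i ^+ 2) = (`|g i| ^+ 3 / Num.sqrt 2) ^+ 2.
  rewrite [RHS]exprMn exprAC real_normK ?num_real // exprVn sqr_sqrtr ?ler0n //.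
  by ring.
by rewrite sqrtr_sqr ger0_norm // divr_ge0 ?exprn_ge0 ?sqrtr_ge0.
Qed.

End RowNorm.

Section LossGradient.
Variables (R : realType) (M N L : nat).
Variables (A : 'M[R]_(M, N)) (Y : 'M[R]_(M, L)).
Variables (g : 'I_N -> R) (V : 'I_N -> 'I_L -> R) (l : 'I_N).

Lemma residual_upd_g (s : R) m j :
  (Y - A *m Xof (upd_g g l s) V) m j
  = (Y - A *m Xof g V) m j + A m l * V l j * (g l ^+ 2 - s ^+ 2).
Proof.
rewrite !mxE (bigD1 l) //= [in RHS](bigD1 l) //= !mxE /upd_g eqxx.
under eq_bigr => k /negbTE kl do rewrite !mxE kl.
under [in RHS]eq_bigr do rewrite mxE.
ring.
Qed.

Lemma dloss_dgE :
  dloss_dg A Y g V l = -4 * g l * \sum_(j < L) Lam A Y (Xof g V) l j * V l j.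
Proof.
rewrite /dloss_dg /loss.
under eq_fun do under eq_bigr do under eq_bigr do rewrite residual_upd_g.
have D := is_derive_sum_pointwise (fun m =>
  is_derive_sum_pointwise (fun j => is_derive_sqr_shift
    ((Y - A *m Xof g V) m j) (A m l * V l j) (g l))).
rewrite derive1E derive_val exchange_big big_distrr /=; apply: eq_bigr => j _.
rewrite !mxE big_distrl big_distrr /=; apply: eq_bigr => m _.
by rewrite !mxE; ring.
Qed.

End LossGradient.

Theorem lemma5p3 (R : realType) (M N L : nat)
  (A : 'M[R]_(M, N)) (Y : 'M[R]_(M, L))
  (g : R -> 'I_N -> R) (V : R -> 'I_N -> 'I_L -> R) :
  (* gradient flow (at every interior time t > 0) *)
  (forall t : R, 0 < t -> forall l : 'I_N,
      is_derive t 1 (fun s => g s l) (- dloss_dg A Y (g t) (V t) l)) ->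
  (forall t : R, 0 < t -> forall (l : 'I_N) (m : 'I_L),
      is_derive t 1 (fun s => V s l m) (- dloss_dV A Y (g t) (V t) l m)) ->
  (* perfect row balancedness *)
  (forall t : R, 0 <= t -> forall i : 'I_N,
      2^-1 * g t i ^+ 2 = \sum_(j < L) V t i j ^+ 2) ->
  forall (i : 'I_N) (t : R), 0 < t ->
    is_derive t 1 (fun s => rownorm (Xof (g s) (V s)) i)
      ((2 : R) `^ (2 / 3) * 6 *
       (\sum_(j < L) Lam A Y (Xof (g t) (V t)) i j * xhat (Xof (g t) (V t)) i j) *
       (rownorm (Xof (g t) (V t)) i) `^ (4 / 3)).
Proof.
move=> flow_g _ balanced i t t_gt0.
have rownormE s : 0 <= s -> rownorm (Xof (g s) (V s)) i = `|g s i| ^+ 3 / Num.sqrt 2.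
  by move=> s_ge0; exact/rownorm_Xof_balanced/balanced.
set G := g t i; set S := \sum_(j < L) Lam A Y (Xof (g t) (V t)) i j * V t i j.
have dG : is_derive t 1 (fun s => g s i) (4 * G * S).
  by apply: is_derive_eq (flow_g t t_gt0 i) _; rewrite dloss_dgE -/G -/S; ring.
have dN := is_deriveZ (Num.sqrt 2)^-1 (is_derive1_comp (is_derive_normr_cube G) dG).
apply: (near_eq_is_derive (f := fun s => (Num.sqrt 2)^-1 * `|g s i| ^+ 3)).
  near=> s; rewrite rownormE 1?mulrC // ltW //; near: s; exact: lt_nbhsr.
apply: is_derive_eq dN _.
rewrite sum_mul_xhat rownormE ?ltW // -/G.
have -> : \sum_(j < L) Lam A Y (Xof (g t) (V t)) i j * Xof (g t) (V t) i j = G ^+ 2 * S.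
  by rewrite big_distrr /=; apply: eq_bigr => j _; rewrite [Xof _ _ i j]mxE -/G; ring.
exact: balanced_rate_identity.
Unshelve. all: by end_near.
Qed.
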